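(* For all $d\ge1$ and $I,K\in \mathcal I_d$ we have $\lambda(d_I)\geq \lambda (d_K)$ in the dominance order if and only if $I\leq K$.
   Context: $L_0\cong\mathfrak{sl}_5$ (the degree-zero part of $E(5,10)$), with Borel spanned by $x_i\partial_j$ ($i<j$) and $h_{ij}=x_i\partial_i-x_j\partial_j$, acts by the adjoint action on $U_-$, the enveloping algebra of $L_-=\langle\partial_i\rangle\oplus\langle d_{ij}\rangle$ ($d_{ij}=dx_i\wedge dx_j$). $\mathcal I_d$ is the set of $d$-tuples of ordered pairs $(i_l,j_l)\in[5]^2$ and $d_I=d_{i_1j_1}\cdots d_{i_dj_d}$; $d_I$ is a weight vector with weight $\lambda(d_I)$ given by $h_{ij}.d_I=(m_i(I)-m_j(I))d_I$, where $m_k(I)$ is the number of occurrences of $k$ among $i_1,j_1,\dots,i_d,j_d$. The dominance order: $\lambda\geq\lambda'$ iff $\lambda-\lambda'$ is a nonnegative integer combination of the simple roots $\alpha_{12},\alpha_{23},\alpha_{34},\alpha_{45}$. Viewing $I$ as the sequence $(i_1,j_1,\dots,i_d,j_d)$ of $2d$ integers, let $I_o=(i'_1,\dots,i'_{2d})$ be its nondecreasing reordering; $I\leq K$ means $i'_r\leq k'_r$ for all $r=1,\dots,2d$, where $K_o=(k'_1,\dots,k'_{2d})$. *)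

From mathcomp Require Import all_boot all_order all_algebra.
Set Implicit Arguments. Unset Strict Implicit. Unset Printing Implicit Defensive.
Import GRing.Theory Num.Theory.
Local Open Scope ring_scope.

(* Indices [5] = {1,...,5} are represented by 'I_5 = {0,...,4} (order-preserving shift). *)

Definition multi_index (d : nat) := (d.-tuple ('I_5 * 'I_5))%type.

Definition flat_idx (d : nat) (I : multi_index d) : seq 'I_5 :=
  flatten [seq [:: p.1; p.2] | p <- I].

Definition mult_idx (d : nat) (I : multi_index d) (k : 'I_5) : nat :=
  count_mem k (flat_idx I).

(* A weight of the Cartan subalgebra of sl_5, recorded by its values on all
   h_{ij} = x_i d_i - x_j d_j. *)
Definition weight := ('I_5 -> 'I_5 -> int)%type.

(* lambda(d_I) : h_{ij} . d_I = (m_i(I) - m_j(I)) d_I. *)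
Definition lambda_d (d : nat) (I : multi_index d) : weight :=
  fun i j => (mult_idx I i)%:Z - (mult_idx I j)%:Z.

Definition eps (k : nat) : weight :=
  fun i j => (k == i :> nat)%:Z - (k == j :> nat)%:Z.

Definition simple_root (k : 'I_4) : weight :=
  fun i j => eps k i j - eps k.+1 i j.

Definition dom_ge (lam lam' : weight) : Prop :=
  exists c : 'I_4 -> nat, forall i j : 'I_5,
    lam i j - lam' i j = \sum_(k < 4) (c k)%:Z * simple_root k i j.

Definition sorted_idx (d : nat) (I : multi_index d) : seq nat :=
  sort leq [seq val x | x <- flat_idx I].

Definition idx_le (d : nat) (I K : multi_index d) : Prop :=
  forall r : nat, (r < 2 * d)%N ->
    (nth 0%N (sorted_idx I) r <= nth 0%N (sorted_idx K) r)%N.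

From mathcomp Require Import all_boot all_order all_algebra zify ring.

Set Implicit Arguments. Unset Strict Implicit. Unset Printing Implicit Defensive.
Import GRing.Theory Num.Theory.

(** Since I and K both have 2d entries, the weight lambda(d_I) - lambda(d_K) =
    sum_k (m_k(I) - m_k(K)) eps_k has coefficient sum_(k <= t) (m_k(I) - m_k(K))
    on the simple root alpha_(t,t+1).  So lambda(d_I) >= lambda(d_K) says that for
    every t at least as many entries of I as of K are <= t, and for two sorted
    sequences of the same length this counting condition is the same as entrywise
    comparison. *)

Lemma sorted_nth_ltn_count (s : seq nat) t r : sorted leq s -> r < size s ->
  (nth 0 s r < t) = (r < count (fun x => x < t) s).
Proof.
elim: s r => [|x s IH] r //= s_sorted r_lt.
have above_x : t <= x -> count (fun y => y < t) s = 0.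
  move=> le_tx; apply/eqP; rewrite -leqn0 leqNgt -has_count; apply/hasPn => y y_s /=.
  by have := allP (order_path_min leq_trans s_sorted) y y_s; rewrite -leqNgt; apply: leq_trans.
case: r r_lt => [|r] r_lt /=.
  by case: (ltnP x t) => [//|/above_x ->].
rewrite IH ?(path_sorted s_sorted) //.
by case: (ltnP x t) => [//|/above_x ->].
Qed.

Lemma sort_nth_le_iff_count n (s1 s2 : seq nat) : size s1 = n -> size s2 = n ->
  (forall r, r < n -> nth 0 (sort leq s1) r <= nth 0 (sort leq s2) r) <->
  (forall t, count (fun x => x < t) s2 <= count (fun x => x < t) s1).
Proof.
move=> <- /esym eq_size.
have [sorted1 sorted2] := (sort_sorted leq_total s1, sort_sorted leq_total s2).
have [size1 size2] := (size_sort leq s1, size_sort leq s2).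
split=> [le_nth t | le_count r r_lt].
- rewrite -(count_sort leq _ s1) -(count_sort leq _ s2).
  case c2_def: (count _ (sort leq s2)) => [//|c].
  have c_lt : c < size s1 by rewrite eq_size -size2 -c2_def count_size.
  rewrite -sorted_nth_ltn_count ?size1 //.
  apply: leq_ltn_trans (le_nth c c_lt) _.
  by rewrite sorted_nth_ltn_count ?c2_def ?size2 -?eq_size.
- rewrite -ltnS sorted_nth_ltn_count ?size1 // count_sort.
  apply: leq_trans (le_count _); rewrite -(count_sort leq _ s2) -sorted_nth_ltn_count //.
  by rewrite size2 -eq_size.
Qed.

Lemma count_sum_count_mem (T : finType) (P : pred T) (s : seq T) :
  count P s = (\sum_(i | P i) count_mem i s)%N.
Proof.
elim: s => [|x s IH] /=; first by rewrite big1.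
rewrite IH big_split /=; congr (_ + _)%N.
have [Px | nPx] := boolP (P x).
  rewrite (bigD1 x) //= eqxx big1 // => i /andP[_].
  by rewrite eq_sym => /negPf ->.
by rewrite big1 // => i Pi; case: eqP => // x_i; rewrite x_i Pi in nPx.
Qed.

Lemma size_flat_idx d (I : multi_index d) : size (flat_idx I) = (2 * d)%N.
Proof.
rewrite /flat_idx -[RHS](congr1 (muln 2) (size_tuple I)).
by elim: (tval I) => //= p s ->; rewrite mulnS.
Qed.

Local Open Scope ring_scope.

Section PrefixSums.
Variable n : nat.
Implicit Types f g : 'I_n -> int.

Definition prefix_sum f (t : nat) : int := \sum_(i < n | (i < t)%N) f i.

Lemma prefix_sum0 f : prefix_sum f 0 = 0.
Proof. by rewrite /prefix_sum big_pred0. Qed.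

Lemma prefix_sum_full f t : (n <= t)%N -> prefix_sum f t = \sum_i f i.
Proof. by move=> le_nt; apply: eq_bigl => i; rewrite (leq_trans (ltn_ord i)). Qed.

Lemma prefix_sumS f (i : 'I_n) : prefix_sum f i.+1 = f i + prefix_sum f i.
Proof.
rewrite /prefix_sum (bigD1 i) ?ltnSn //=; congr (_ + _).
by apply: eq_bigl => j; rewrite ltnS ltn_neqAle -val_eqE andbC.
Qed.

Lemma prefix_sumB f g t :
  prefix_sum (fun i => f i - g i) t = prefix_sum f t - prefix_sum g t.
Proof. exact: sumrB. Qed.

Lemma eq_prefix_sum f g : (forall t, prefix_sum f t = prefix_sum g t) -> f =1 g.
Proof.
move=> eq_fg i; have := eq_fg i.+1.
by rewrite !prefix_sumS eq_fg => /addIr.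
Qed.

Lemma prefix_sum_delta (a t : nat) : (a < n)%N ->
  prefix_sum (fun i => (a == i :> nat)%:Z) t = (a < t)%N%:Z.
Proof.
move=> lt_an; have [lt_at | le_ta] := ltnP a t.
  rewrite /prefix_sum (bigD1 (Ordinal lt_an)) //= eqxx big1 ?addr0 // => i /andP[_].
  by rewrite eq_sym -val_eqE => /negPf ->.
rewrite /prefix_sum big1 // => i lt_it.
by rewrite gtn_eqF // (leq_trans lt_it).
Qed.

End PrefixSums.

Definition root_comb n (c : 'I_n -> int) (i : 'I_n.+1) : int :=
  \sum_(k < n) c k * ((k == i :> nat)%:Z - (k.+1 == i :> nat)%:Z).

Lemma prefix_sum_root_comb n (c : 'I_n -> int) t :
  prefix_sum (root_comb c) t = \sum_(k < n | k.+1 == t) c k.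
Proof.
have delta a : (a < n.+1)%N ->
    \sum_(i < n.+1 | (i < t)%N) (a == i :> nat)%:Z = (a < t)%N%:Z.
  exact: prefix_sum_delta.
rewrite /prefix_sum /root_comb exchange_big /= [RHS]big_mkcond /=; apply: eq_bigr => k _.
rewrite -mulr_sumr sumrB (delta k (ltnW (ltn_ord k))) (delta k.+1 (ltn_ord k)).
have -> : (k < t)%N%:Z - (k.+1 < t)%N%:Z = (k.+1 == t)%:Z.
  by case: (ltngtP k.+1 t).
by case: ifP; rewrite ?mulr1 ?mulr0.
Qed.

Lemma sum_root_comb n (c : 'I_n -> int) : \sum_i root_comb c i = 0.
Proof.
rewrite -(prefix_sum_full _ (leqnn n.+1)) prefix_sum_root_comb big_pred0 // => k.
by rewrite eqSS ltn_eqF.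
Qed.

Lemma sum_simple_roots (c : 'I_4 -> int) (i j : 'I_5) :
  \sum_(k < 4) c k * simple_root k i j = root_comb c i - root_comb c j.
Proof. by rewrite -sumrB; apply: eq_bigr => k _; rewrite /simple_root /eps; ring. Qed.

Lemma eq_diff_sum n (g h : 'I_n.+1 -> int) :
  (forall i j, g i - g j = h i - h j) -> \sum_i g i = \sum_i h i -> g =1 h.
Proof.
move=> eq_diff eq_sum; set delta := g ord0 - h ord0.
have shift i : g i = h i + delta by rewrite /delta; have := eq_diff i ord0; lia.
have /eqP : delta *+ n.+1 = 0.
  apply: (@addrI _ (\sum_i h i)); rewrite addr0 -[RHS]eq_sum.
  by rewrite (eq_bigr _ (fun i _ => shift i)) big_split /= sumr_const card_ord.
by rewrite mulrn_eq0 /= => /eqP delta0 i; rewrite shift delta0 addr0.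
Qed.

Lemma root_comb_prefix_sums n (e : 'I_n.+1 -> int) :
  \sum_i e i = 0 -> e =1 root_comb (fun k : 'I_n => prefix_sum e k.+1).
Proof.
move=> sum_e; apply: eq_prefix_sum => t; rewrite prefix_sum_root_comb.
case: t => [|t]; first by rewrite prefix_sum0 big_pred0.
have [lt_tn | le_nt] := ltnP t n.
  by rewrite (big_pred1 (Ordinal lt_tn)) // => k; rewrite /= eqSS.
rewrite prefix_sum_full // sum_e big_pred0 // => k.
by rewrite eqSS ltn_eqF // (leq_trans (ltn_ord k)).
Qed.

Lemma dom_ge_iff_prefix_sum_le (g h : 'I_5 -> int) : \sum_i g i = \sum_i h i ->
  dom_ge (fun i j => g i - g j) (fun i j => h i - h j) <->
  (forall t, prefix_sum h t <= prefix_sum g t).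
Proof.
move=> eq_sum; set e := fun i => g i - h i.
have sum_e : \sum_i e i = 0 by rewrite sumrB eq_sum subrr.
have prefix_e t : prefix_sum g t - prefix_sum h t = prefix_sum e t.
  by rewrite prefix_sumB.
split=> [[c dom] t | le_hg].
- have e_c : e =1 root_comb (fun k => (c k)%:Z).
    apply: eq_diff_sum; last by rewrite sum_e sum_root_comb.
    by move=> i j; rewrite -sum_simple_roots -dom /e; ring.
  rewrite -subr_ge0 prefix_e.
  have -> : prefix_sum e t = prefix_sum (root_comb (fun k => (c k)%:Z)) t.
    by apply: eq_bigr => i _; exact: e_c.
  by rewrite prefix_sum_root_comb sumr_ge0.
- exists (fun k => `|prefix_sum e k.+1|%N) => i j.
  have -> : g i - g j - (h i - h j) = e i - e j by rewrite /e; ring.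
  rewrite sum_simple_roots !(root_comb_prefix_sums sum_e).
  have coef_e : root_comb (fun k : 'I_4 => `|prefix_sum e k.+1|%N%:Z) =1
                 root_comb (fun k : 'I_4 => prefix_sum e k.+1).
    by move=> l; apply: eq_bigr => k _; rewrite abszE ger0_norm // -prefix_e subr_ge0.
  by rewrite !coef_e.
Qed.

Lemma prefix_sum_mult_idx d (I : multi_index d) t :
  prefix_sum (fun k => (mult_idx I k)%:Z) t =
  (count (fun x => x < t)%N [seq val x | x <- flat_idx I])%:Z.
Proof.
rewrite count_map (count_sum_count_mem [pred k : 'I_5 | k < t]%N).
by rewrite (big_morph Posz PoszD (erefl 0%:Z)).
Qed.

Lemma sum_mult_idx d (I : multi_index d) : \sum_k (mult_idx I k)%:Z = (2 * d)%N%:Z.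
Proof.
rewrite -(prefix_sum_full _ (leqnn 5)) prefix_sum_mult_idx -(size_flat_idx I) -(size_map val).
by congr Posz; apply/eqP; rewrite -all_count; apply/allP => _ /mapP[k _ ->]; exact: ltn_ord.
Qed.

Theorem proposition6p2 (d : nat) (hd : (1 <= d)%N) (I K : multi_index d) :
  dom_ge (lambda_d I) (lambda_d K) <-> idx_le I K.
Proof.
have size_vals (J : multi_index d) : size [seq val x | x <- flat_idx J] = (2 * d)%N.
  by rewrite size_map size_flat_idx.
apply: (iff_trans _ (iff_sym (sort_nth_le_iff_count (size_vals I) (size_vals K)))).
apply: (iff_trans (dom_ge_iff_prefix_sum_le (g := fun k => (mult_idx I k)%:Z)
                                            (h := fun k => (mult_idx K k)%:Z) _)).
  by rewrite !sum_mult_idx.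
by split=> le_count t; have := le_count t; rewrite !prefix_sum_mult_idx lez_nat.
Qed.
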